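(* Consider the lift $\varphi\colon\mathrm{S}^{n-1}\to\Delta^{n-1}$, $\varphi(y)=y\odot y$ (entrywise square). It satisfies ''local $\Rightarrow$ local'' at every point, satisfies ''1 $\Rightarrow$ 1'' at $y$ if and only if $y_i\neq0$ for all $i$, and satisfies ''2 $\Rightarrow$ 1'' at every point.
   Context: $\mathrm{S}^{n-1}$ is the unit sphere in $\mathbb{R}^n$ and $\Delta^{n-1}=\{x\in\mathbb{R}^n: x\ge0,\ \sum_i x_i=1\}$. General setting: for a smooth manifold $\mathcal{M}$ and smooth $\varphi\colon\mathcal{M}\to\mathcal{E}$ with image $\mathcal{X}$, and a cost $f$, set $g=f\circ\varphi$. Tangent cone: $\mathrm{T}_x\mathcal{X}=\{\lim (x_i-x)/\tau_i: x_i\in\mathcal{X},\tau_i>0,\tau_i\to0\}$; $K^*=\{u:\langle u,v\rangle\ge0\ \forall v\in K\}$; $x$ is stationary for $f$ on $\mathcal{X}$ if $\nabla f(x)\in(\mathrm{T}_x\mathcal{X})^*$. $y$ is 1-critical for $g$ if $(g\circ c)'(0)=0$ for all smooth curves $c$ in $\mathcal{M}$ with $c(0)=y$, and 2-critical if moreover $(g\circ c)''(0)\ge0$ for all such curves. ''local $\Rightarrow$ local'' at $y$: for every continuous $f\colon\mathcal{X}\to\mathbb{R}$, if $y$ is a local minimum of $g$ then $\varphi(y)$ is a local minimum of $f$ on $\mathcal{X}$. ''$k\Rightarrow1$'' at $y$ ($k=1,2$): for every $k$-times differentiable $f\colon\mathcal{E}\to\mathbb{R}$, if $y$ is $k$-critical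 for $g$ then $\varphi(y)$ is stationary for $f$ on $\mathcal{X}$. *)

From HB Require Import structures.
From mathcomp Require Import all_boot all_order all_algebra.
From mathcomp Require Import all_classical all_reals topology normedtype sequences derive.
Set Implicit Arguments. Unset Strict Implicit. Unset Printing Implicit Defensive.
Import Order.TTheory GRing.Theory Num.Theory.
Import numFieldNormedType.Exports.
Local Open Scope classical_set_scope.
Local Open Scope ring_scope.

Section Defs.
Variables (R : realType) (n : nat).
Notation E := 'rV[R]_n.

Definition sphere : set E := [set y | \sum_(i < n) (y ord0 i) ^+ 2 = 1].

Definition simplex : set E :=
  [set x | (forall i, 0 <= x ord0 i) /\ \sum_(i < n) x ord0 i = 1].

Definition sqlift (y : E) : E := \row_i (y ord0 i) ^+ 2.

Definition smooth_curve_on (M : set E) (c : R -> E) : Prop :=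
  (forall t, M (c t)) /\ (forall k t, derivable (derive1n k c) t 1).

Definition local_min_on (X : set E) (h : E -> R) (x : E) : Prop :=
  X x /\ \forall z \near x, X z -> h x <= h z.

Definition tangent_cone (X : set E) (x : E) : set E :=
  [set v | exists (u : nat -> E) (tau : nat -> R),
     (forall k, X (u k)) /\ (forall k, 0 < tau k) /\
     tau @ \oo --> (0 : R) /\
     (fun k => (tau k)^-1 *: (u k - x)) @ \oo --> v].

(* x is stationary for f on X : grad f(x) lies in the dual cone of T_x X,
   i.e. <grad f(x), v> = Df(x)[v] >= 0 for all v in T_x X *)
Definition stationary (f : E -> R) (X : set E) (x : E) : Prop :=
  X x /\ forall v, tangent_cone X x v -> 0 <= 'd f x v.

Definition one_critical (g : E -> R) (y : E) : Prop :=
  sphere y /\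
  forall c, smooth_curve_on sphere c -> c 0 = y ->
    derivable (g \o c) 0 1 /\ derive1 (g \o c) 0 = 0.

Definition two_critical (g : E -> R) (y : E) : Prop :=
  one_critical g y /\
  forall c, smooth_curve_on sphere c -> c 0 = y ->
    derivable (derive1 (g \o c)) 0 1 /\ 0 <= derive1n 2 (g \o c) 0.

(* k-times (Frechet) differentiable f : R^n -> R, k = 1, 2.
   Twice differentiable: f differentiable and its gradient map differentiable
   (equivalent to x |-> Df(x) differentiable, in finite dimension). *)
Definition gradient (f : E -> R) (x : E) : E := \row_i 'd f x (delta_mx ord0 i).

Definition k_differentiable (k : nat) (f : E -> R) : Prop :=
  match k with
  | 0 => True
  | 1 => forall x, differentiable f x
  | _ => (forall x, differentiable f x) /\ (forall x, differentiable (gradient f) x)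
  end.

Definition local_local (y : E) : Prop :=
  forall f : E -> R, {within simplex, continuous f} ->
    local_min_on sphere (f \o sqlift) y -> local_min_on simplex f (sqlift y).

Definition one_to_one (y : E) : Prop :=
  forall f : E -> R, k_differentiable 1 f ->
    one_critical (f \o sqlift) y -> stationary f simplex (sqlift y).

Definition two_to_one (y : E) : Prop :=
  forall f : E -> R, k_differentiable 2 f ->
    two_critical (f \o sqlift) y -> stationary f simplex (sqlift y).

End Defs.

(* The map [x |-> (sign(y_k) sqrt x_k)_k] is a continuous right inverse of [phi] on
   the simplex that sends [phi y] back to [y], so local minima of [f \o phi] on the
   sphere descend to local minima of [f] on the simplex.
   Rotating [y] by an angle [t] in the coordinate plane [(i, j)] gives a curve [c] on
   the sphere along which [(f \o phi \o c)' = 2 c_i c_j (d_j f - d_i f)(phi (c t))].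
   At [t = 0], first-order criticality forces [d_i f = d_j f] on the support of [y],
   and when [y_i != 0 = y_j] second-order criticality yields [d_i f <= d_j f]: these
   are the KKT conditions for stationarity on the simplex.  Conversely, if [y_i = 0],
   the linear cost [x |-> - x_i] makes [y] 1-critical although [phi y] is not
   stationary, since [e_i - phi y] is a descent direction. *)

From HB Require Import structures.
From mathcomp Require Import all_boot all_order all_algebra.
From mathcomp Require Import all_classical all_reals topology normedtype sequences derive.
From mathcomp Require Import realfun trigo.
From mathcomp Require Import ring lra.
Set Implicit Arguments. Unset Strict Implicit. Unset Printing Implicit Defensive.
Import Order.TTheory GRing.Theory Num.Theory.
Import numFieldNormedType.Exports.
Local Open Scope classical_set_scope.
Local Open Scope ring_scope.

Section curve_calculus.
Variables (R : realType) (V : normedModType R).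

Lemma is_derive_scalel (A : V) (k : R -> R) (t dk : R) :
  is_derive t 1 k dk -> is_derive t 1 (fun s => k s *: A) (dk *: A).
Proof.
move=> [dk1 <-].
have dk2 : differentiable k t by apply/derivable1_diffP.
have dkA : differentiable (fun s => k s *: A) t by apply: differentiableZl.
split; first exact/derivable1_diffP.
by rewrite deriveE // diffZl // -deriveE.
Qed.

Lemma is_derive_diff_comp (W : normedModType R) (f : V -> W) (c : R -> V) (t : R)
    (dc : V) :
  differentiable f (c t) -> is_derive t 1 c dc ->
  is_derive t 1 (f \o c) ('d f (c t) dc).
Proof.
move=> df [dc1 <-].
have dct : differentiable c t by apply/derivable1_diffP.
have dfc : differentiable (f \o c) t by apply: differentiable_comp.
split; first exact/derivable1_diffP.
by rewrite !deriveE // diff_comp.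
Qed.

Lemma is_derive_coord (m p : nat) (M : V -> 'M[R]_(m, p)) (x v : V) (dM : 'M[R]_(m, p))
    i j :
  is_derive x v M dM -> is_derive x v (fun z => M z i j) (dM i j).
Proof.
move=> [dM1 <-]; split; first exact: (derivable_mxP M x v).1 dM1 i j.
by rewrite derive_mx // mxE.
Qed.

Definition trig_curve (C A B : V) (t : R) : V := C + cos t *: A + sin t *: B.

Lemma is_derive_trig_curve (C A B : V) (t : R) :
  is_derive t 1 (trig_curve C A B) (trig_curve 0 B (- A) t).
Proof.
have -> : trig_curve C A B = cst C + (fun s => cos s *: A) + (fun s => sin s *: B).
  exact/funext.
apply: (is_derive_eq (is_deriveD (is_deriveD (@is_derive_cst R R V C t 1)
  (is_derive_scalel A (is_derive_cos t))) (is_derive_scalel B (is_derive_sin t)))).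
by rewrite /trig_curve !add0r scalerN scaleNr addrC.
Qed.

Lemma derive1_trig_curve (C A B : V) : derive1 (trig_curve C A B) = trig_curve 0 B (- A).
Proof. by apply/funext => t; rewrite derive1E; have [_ ->] := is_derive_trig_curve C A B t. Qed.

Lemma derivable_derive1n_trig_curve (C A B : V) k (t : R) :
  derivable (derive1n k (trig_curve C A B)) t 1.
Proof.
elim: k C A B => [|k IH] C A B; first by case: (is_derive_trig_curve C A B t).
by rewrite derive1Sn derive1_trig_curve.
Qed.

End curve_calculus.

Lemma derive1M_root (R : realType) (p q : R -> R) (t : R) :
  p t = 0 -> derivable p t 1 -> {for t, continuous q} ->
  derive1 (fun s => p s * q s) t = derive1 p t * q t.
Proof.
move=> pt0 dp cq; rewrite !derive1E; apply: cvg_lim => //.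
have -> : (fun h : R => h^-1 *: (((fun s => p s * q s) \o shift t) (h *: 1) - p t * q t)) =
    (fun h => h^-1 *: ((p \o shift t) (h *: 1) - p t)) \* (fun h => q (h + t)).
  by apply/funext => h; rewrite /= pt0 !mul0r !subr0 [_%:A]mulr1 scalerAl.
apply: cvgM; first exact: dp.
have : {for 0, continuous (fun h : R => q (h + t))}.
  apply: continuous_comp; last by rewrite add0r.
  by apply: cvgD; [exact: cvg_id | exact: cvg_cst].
by move=> /continuous_withinNx; rewrite add0r.
Qed.

Lemma local_min_on_section (R : realType) (n : nat) (M X : set 'rV[R]_n)
    (p s : 'rV[R]_n -> 'rV[R]_n) (h : 'rV[R]_n -> R) (y : 'rV[R]_n) :
  (forall x, X x -> M (s x) /\ p (s x) = x) -> s (p y) = y ->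
  {for p y, continuous s} -> X (p y) ->
  local_min_on M (h \o p) y -> local_min_on X h (p y).
Proof.
move=> sec spy cs Xpy [_ ymin]; split=> //.
have ymin' : \forall z \near s (p y), M z -> h (p y) <= h (p z) by rewrite spy.
apply: (@filterS _ _ (nbhs_filter (p y)) _ _ _ (cs _ ymin')) => x /= xmin Xx.
by have [Msx <-] := sec x Xx; apply: xmin.
Qed.

Section sphere_lift.
Variables (R : realType) (n : nat).
Local Notation E := 'rV[R]_n.
Local Notation phi := (@sqlift R n).
Local Notation Delta := (@simplex R n).

Lemma diff_gradient (f : E -> R) (x v : E) :
  'd f x v = \sum_k v ord0 k * gradient f x ord0 k.
Proof.
rewrite {1}(row_sum_delta v) linear_sum; apply: eq_bigr => k _.
by rewrite linearZ /gradient mxE.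
Qed.

Lemma is_derive_sqlift_comp (c : R -> E) (t : R) (dc : E) :
  is_derive t 1 c dc -> is_derive t 1 (phi \o c) (\row_k (2 * c t ord0 k * dc ord0 k)).
Proof.
move=> cdc.
have ck k : is_derive t 1 (fun s => phi (c s) ord0 k) (2 * c t ord0 k * dc ord0 k).
  have -> : (fun s => phi (c s) ord0 k) = (fun s => c s ord0 k) ^+ 2.
    by apply/funext => s; rewrite mxE.
  by apply: is_derive_eq (is_deriveX 2 (is_derive_coord ord0 k cdc)) _; rewrite expr1.
have dsc : derivable (phi \o c) t 1.
  by apply/derivable_mxP => i k; rewrite (ord1 i); case: (ck k).
split => //; rewrite derive_mx //; apply/rowP => k; rewrite !mxE.
by have [_ ->] := ck k.
Qed.

Lemma is_derive_lift_comp (f : E -> R) (c : R -> E) (t : R) (dc : E) :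
  differentiable f (phi (c t)) -> is_derive t 1 c dc ->
  is_derive t 1 ((f \o phi) \o c)
    (\sum_k 2 * c t ord0 k * dc ord0 k * gradient f (phi (c t)) ord0 k).
Proof.
move=> df cdc; apply: is_derive_eq (is_derive_diff_comp df (is_derive_sqlift_comp cdc)) _.
by rewrite diff_gradient; apply: eq_bigr => k _; rewrite mxE.
Qed.

Lemma continuous_coord_at (h : R -> E) (t : R) k :
  {for t, continuous h} -> {for t, continuous (fun s => h s ord0 k)}.
Proof. by move=> ch; apply: continuous_comp ch (@coord_continuous _ _ _ ord0 k _). Qed.

Lemma tangent_cone_coord_cvg (X : set E) (x v : E) : tangent_cone X x v ->
  exists (u : nat -> E) (tau : nat -> R), (forall m, X (u m)) /\ (forall m, 0 < tau m) /\
    forall k, (tau m)^-1 * (u m ord0 k - x ord0 k) @[m --> \oo] --> v ord0 k.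
Proof.
move=> [u [tau [Xu [tau0 [_ uv]]]]]; exists u, tau; split=> //; split=> // k.
have /(_ eventually_filter) := continuous_cvg _ (@coord_continuous _ _ _ ord0 k v) uv.
rewrite (eq_cvg _ _ (g := fun m => (tau m)^-1 * (u m ord0 k - x ord0 k))) // => m /=.
by rewrite !mxE.
Qed.

Lemma tangent_cone_simplex_sum (x v : E) :
  simplex x -> tangent_cone Delta x v -> \sum_k v ord0 k = 0.
Proof.
move=> [_ sx1] /tangent_cone_coord_cvg[u [tau [Xu [_ uv]]]].
have := @cvg_big _ _ +%R 0 predT add_continuous _ \oo (index_enum _) _ _
  eventually_filter (fun k _ => uv k).
under eq_cvg do rewrite -mulr_sumr sumrB (Xu _).2 sx1 subrr mulr0.
by move/(cvg_lim (@Rhausdorff R)); rewrite lim_cst.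
Qed.

Lemma tangent_cone_simplex_ge0 (x v : E) k :
  tangent_cone Delta x v -> x ord0 k = 0 -> 0 <= v ord0 k.
Proof.
move=> /tangent_cone_coord_cvg[u [tau [Xu [tau0 uv]]]] xk0.
rewrite -(cvg_lim (@Rhausdorff R) (uv k)); apply: limr_ge; first exact: cvgP (uv k).
apply: nearW => m; rewrite xk0 subr0 mulr_ge0 ?invr_ge0 ?(ltW (tau0 m)) //.
exact: (Xu m).1.
Qed.

Lemma tangent_cone_segment (X : set E) (x z : E) :
  (forall t, 0 < t <= 1 -> X (x + t *: (z - x))) -> tangent_cone X x (z - x).
Proof.
move=> Xseg; exists (fun m => x + harmonic m *: (z - x)), harmonic.
have h0 m : 0 < harmonic m :> R := harmonic_gt0 m.
split=> [m|]; first by apply: Xseg; rewrite h0 /harmonic /= invf_le1 ?ler1n // ltr0n.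
split=> //; split; first exact: cvg_harmonic.
apply: cvg_near_cst; apply: nearW => m.
by rewrite addrAC subrr add0r scalerA mulVf ?scale1r // lt0r_neq0.
Qed.

Lemma simplex_segment (x z : E) (t : R) :
  simplex x -> simplex z -> 0 <= t <= 1 -> simplex (x + t *: (z - x)).
Proof.
move=> [x0 x1] [z0 z1] /andP[t0 t1]; split=> [k|].
  by have := x0 k; have := z0 k; rewrite !mxE; nra.
under eq_bigr do rewrite !mxE.
by rewrite big_split /= -mulr_sumr sumrB x1 z1 subrr mulr0 addr0.
Qed.

Lemma simplex_delta (i : 'I_n) : simplex (delta_mx ord0 i : E).
Proof.
split=> [k|]; first by rewrite mxE ler0n.
rewrite (bigD1 i) //= big1 => [|k ki]; first by rewrite mxE !eqxx addr0.
by rewrite mxE (negbTE ki) andbF.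
Qed.

Lemma simplex_sqlift (y : E) : sphere y -> simplex (phi y).
Proof.
move=> sy; split=> [k|]; first by rewrite mxE sqr_ge0.
by rewrite -sy; apply: eq_bigr => k _; rewrite mxE.
Qed.

Lemma sqlift_coord_eq0 (y : E) k : (phi y ord0 k == 0) = (y ord0 k == 0).
Proof. by rewrite mxE sqrf_eq0. Qed.

Lemma sphere_coord_neq0 (y : E) : sphere y -> exists i, y ord0 i != 0.
Proof.
move=> sy; have [i yi|y0] := pickP (fun i => y ord0 i != 0); first by exists i.
move: sy; rewrite /sphere /= big1 => [/eqP|k _]; first by rewrite eq_sym oner_eq0.
by move/negbFE/eqP: (y0 k) => ->; rewrite expr0n.
Qed.

Lemma stationary_simplex (f : E -> R) (x : E) (lam : R) : simplex x ->
  (forall k, x ord0 k != 0 -> gradient f x ord0 k = lam) ->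
  (forall k, lam <= gradient f x ord0 k) -> stationary f Delta x.
Proof.
move=> sx supp_eq lam_le; split=> // v tv.
have -> : 'd f x v =
    \sum_k v ord0 k * (gradient f x ord0 k - lam) + lam * \sum_k v ord0 k.
  by rewrite diff_gradient mulr_sumr -big_split /=; apply: eq_bigr => k _; ring.
rewrite (tangent_cone_simplex_sum sx tv) mulr0 addr0.
apply: sumr_ge0 => k _; have [xk0|xk] := eqVneq (x ord0 k) 0.
  by rewrite mulr_ge0 ?subr_ge0 //; exact: tangent_cone_simplex_ge0 tv xk0.
by rewrite supp_eq // subrr mulr0.
Qed.

Definition rot_curve (y : E) (i j : 'I_n) : R -> E :=
  trig_curve (y - (y ord0 i *: delta_mx ord0 i + y ord0 j *: delta_mx ord0 j))
    (y ord0 i *: delta_mx ord0 i + y ord0 j *: delta_mx ord0 j)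
    (y ord0 i *: delta_mx ord0 j - y ord0 j *: delta_mx ord0 i).

Section rotation.
Variables (y : E) (i j : 'I_n).
Hypothesis ij : i != j.

Lemma rot_curve_coord (t : R) k : rot_curve y i j t ord0 k =
  if k == i then cos t * y ord0 i - sin t * y ord0 j
  else if k == j then sin t * y ord0 i + cos t * y ord0 j
  else y ord0 k.
Proof.
rewrite /rot_curve /trig_curve !mxE eqxx !andTb !mulrb.
have [->|ki] := eqVneq k i; first by rewrite ?eqxx (negbTE ij); ring.
by have [->|kj] := eqVneq k j; rewrite ?eqxx; ring.
Qed.

Lemma rot_curve0 : rot_curve y i j 0 = y.
Proof. by rewrite /rot_curve /trig_curve cos0 sin0 scale1r scale0r addr0 subrK. Qed.

Lemma is_derive_rot_curve (t : R) :
  is_derive t 1 (rot_curve y i j) (derive1 (rot_curve y i j) t).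
Proof. by rewrite /rot_curve derive1_trig_curve; exact: is_derive_trig_curve. Qed.

Lemma derive1_rot_curve_coord (t : R) k : derive1 (rot_curve y i j) t ord0 k =
  if k == i then - rot_curve y i j t ord0 j
  else if k == j then rot_curve y i j t ord0 i
  else 0.
Proof.
rewrite !rot_curve_coord /rot_curve derive1_trig_curve /trig_curve !mxE eqxx !andTb !mulrb.
have [->|ki] := eqVneq k i.
  by rewrite (ifN_eq _ _ ij) (ifN_eqC _ _ ij) eqxx; ring.
by case: eqVneq => _; rewrite ?eqxx; ring.
Qed.

Lemma rot_curve_sphere (t : R) : sphere y -> sphere (rot_curve y i j t).
Proof.
rewrite /sphere /= => <-; apply/eqP; rewrite -subr_eq0 -sumrB.
rewrite (bigD1 i) // (bigD1 j) /=; last by rewrite eq_sym.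
rewrite big1 => [|k /andP[ki kj]]; last first.
  by rewrite rot_curve_coord (negbTE ki) (negbTE kj) subrr.
rewrite !rot_curve_coord eqxx (ifN_eqC _ _ ij) eqxx addr0.
have -> : (cos t * y ord0 i - sin t * y ord0 j) ^+ 2 - y ord0 i ^+ 2 +
    ((sin t * y ord0 i + cos t * y ord0 j) ^+ 2 - y ord0 j ^+ 2) =
    (cos t ^+ 2 + sin t ^+ 2 - 1) * (y ord0 i ^+ 2 + y ord0 j ^+ 2) by ring.
by rewrite cos2Dsin2 subrr mul0r.
Qed.

Lemma rot_curve_smooth : sphere y -> smooth_curve_on (@sphere R n) (rot_curve y i j).
Proof.
move=> sy; split=> [t|k t]; first exact: rot_curve_sphere.
exact: derivable_derive1n_trig_curve.
Qed.

Lemma derive1_lift_rot_curve (f : E -> R) (t : R) : (forall x, differentiable f x) ->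
  derive1 ((f \o phi) \o rot_curve y i j) t =
  2 * (rot_curve y i j t ord0 i * rot_curve y i j t ord0 j) *
  (gradient f (phi (rot_curve y i j t)) ord0 j -
   gradient f (phi (rot_curve y i j t)) ord0 i).
Proof.
move=> df; rewrite derive1E.
have [_ ->] := is_derive_lift_comp (df _) (is_derive_rot_curve t).
rewrite (bigD1 i) // (bigD1 j) /=; last by rewrite eq_sym.
rewrite big1 => [|k /andP[ki kj]]; last first.
  by rewrite derive1_rot_curve_coord (negbTE ki) (negbTE kj) mulr0 mul0r.
rewrite !derive1_rot_curve_coord eqxx (ifN_eqC _ _ ij) eqxx addr0; ring.
Qed.

End rotation.

Lemma one_critical_gradient_eq (f : E -> R) (y : E) (i j : 'I_n) :
  (forall x, differentiable f x) -> one_critical (f \o phi) y ->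
  y ord0 i != 0 -> y ord0 j != 0 ->
  gradient f (phi y) ord0 i = gradient f (phi y) ord0 j.
Proof.
move=> df [sy crit] yi yj; have [<-//|ij] := eqVneq i j.
have [_] := crit _ (rot_curve_smooth ij sy) (rot_curve0 y i j).
rewrite derive1_lift_rot_curve // rot_curve0 => /eqP.
by rewrite !mulf_eq0 pnatr_eq0 (negbTE yi) (negbTE yj) subr_eq0 /= => /eqP ->.
Qed.

Lemma two_critical_gradient_le (f : E -> R) (y : E) (i j : 'I_n) :
  k_differentiable 2 f -> two_critical (f \o phi) y ->
  y ord0 i != 0 -> y ord0 j = 0 ->
  gradient f (phi y) ord0 i <= gradient f (phi y) ord0 j.
Proof.
move=> [df dG] [[sy _] crit2] yi yj0.
have ij : i != j by apply: contraNneq yi => ->; rewrite yj0.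
set c := rot_curve y i j.
pose q t := 2 * c t ord0 i *
  (gradient f (phi (c t)) ord0 j - gradient f (phi (c t)) ord0 i).
have cdc := is_derive_rot_curve y i j 0.
have cj := is_derive_coord ord0 j cdc.
have cont_c : {for 0, continuous c}.
  by apply/differentiable_continuous/derivable1_diffP; case: cdc.
have cont_phic : {for 0, continuous (phi \o c)}.
  by apply/differentiable_continuous/derivable1_diffP; case: (is_derive_sqlift_comp cdc).
have cont_grad : {for 0, continuous (gradient f \o (phi \o c))}.
  exact: continuous_comp cont_phic (differentiable_continuous (dG _)).
have cont_q : {for 0, continuous q}.
  apply: cvgM; [apply: cvgMl_tmp | apply: cvgB].
  - exact: continuous_coord_at cont_c.
  - exact: continuous_coord_at cont_grad.
  - exact: continuous_coord_at cont_grad.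
have [_] := crit2 _ (rot_curve_smooth ij sy) (rot_curve0 y i j).
(* Since [c_j] vanishes at [0], differentiating [(f \o phi \o c)' = c_j * q] once
   more only needs the continuity of [q], hence of the gradient. *)
have -> : derive1n 2 ((f \o phi) \o c) 0 = derive1 (fun t => c t ord0 j * q t) 0.
  rewrite derive1nS derive1n1; congr (derive1 _ 0); apply/funext => t.
  by rewrite derive1_lift_rot_curve // /q; ring.
rewrite derive1M_root; last 3 first.
- by rewrite /c rot_curve0.
- by case: cj.
- exact: cont_q.
rewrite derive1E; have [_ ->] := cj.
rewrite derive1_rot_curve_coord // (ifN_eqC _ _ ij) eqxx /q /c rot_curve0.
by rewrite mulrA mulrCA -expr2 pmulr_rge0 ?subr_ge0 // mulr_gt0 // exprn_even_gt0.
Qed.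

Lemma stationary_sqlift (f : E -> R) (y : E) :
  (forall x, differentiable f x) -> one_critical (f \o phi) y ->
  (forall i j, y ord0 i != 0 -> y ord0 j = 0 ->
     gradient f (phi y) ord0 i <= gradient f (phi y) ord0 j) ->
  stationary f Delta (phi y).
Proof.
move=> df crit le_grad; have [i yi] := sphere_coord_neq0 crit.1.
apply: (@stationary_simplex _ _ (gradient f (phi y) ord0 i)).
- exact: simplex_sqlift crit.1.
- move=> k; rewrite sqlift_coord_eq0 => yk.
  by rewrite (one_critical_gradient_eq df crit yi yk).
- move=> k; have [yk0|yk] := eqVneq (y ord0 k) 0; first exact: le_grad.
  by rewrite (one_critical_gradient_eq df crit yi yk).
Qed.

Lemma one_to_one_sqlift (y : E) : sphere y -> (forall i, y ord0 i != 0) -> one_to_one y.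
Proof.
move=> _ y_neq0 f df crit; apply: stationary_sqlift => // i j _ yj0.
by move: (y_neq0 j); rewrite yj0 eqxx.
Qed.

Lemma two_to_one_sqlift (y : E) : sphere y -> two_to_one y.
Proof.
move=> _ f f2 crit2; apply: stationary_sqlift => [||i j]; [exact: f2.1 | exact: crit2.1 |].
exact: two_critical_gradient_le.
Qed.

Lemma one_to_one_sqlift_coord_neq0 (y : E) :
  sphere y -> one_to_one y -> forall i, y ord0 i != 0.
Proof.
move=> sy one_one i; apply/negP => /eqP yi0.
pose f (x : E) := - x ord0 i.
have df x : differentiable f x by apply: differentiableN; exact: differentiable_coord.
have dfE x v : 'd f x v = - v ord0 i.
  rewrite -deriveE //.
  by case: (is_deriveN (is_derive_coord ord0 i (is_derive_id x v))) => _ <-.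
have crit : one_critical (f \o phi) y.
  split=> // c [_ smooth_c] c0; rewrite derive1E.
  have dc : derivable c 0 1 := smooth_c 0%N 0.
  have [dg ->] := is_derive_lift_comp (df _) (derivableP dc).
  split=> //; rewrite c0 big1 // => k _; rewrite /gradient mxE dfE !mxE eqxx andTb mulrb.
  by have [->|_] := eqVneq k i; rewrite /= ?yi0 ?oppr0 ?mulr0 ?mul0r.
have [_ stat] := one_one f df crit.
have tv : tangent_cone Delta (phi y) (delta_mx ord0 i - phi y).
  apply: tangent_cone_segment => t /andP[t0 t1].
  by apply: simplex_segment; [exact: simplex_sqlift | exact: simplex_delta | rewrite ltW].
by have := stat _ tv; rewrite dfE !mxE !eqxx yi0 expr0n subr0 oppr_ge0 ler10.
Qed.

Definition signed_sqrt (y x : E) : E :=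
  \row_k ((-1) ^+ (y ord0 k < 0)%R * Num.sqrt (x ord0 k)).

Lemma signed_sqrt_sqlift (y : E) : signed_sqrt y (phi y) = y.
Proof. by apply/rowP => k; rewrite !mxE sqrtr_sqr mulr_sign_norm. Qed.

Lemma sqlift_signed_sqrt (y x : E) :
  (forall k, 0 <= x ord0 k) -> phi (signed_sqrt y x) = x.
Proof. by move=> x0; apply/rowP => k; rewrite !mxE exprMn sqrr_sign mul1r sqr_sqrtr. Qed.

Lemma sphere_signed_sqrt (y x : E) : simplex x -> sphere (signed_sqrt y x).
Proof.
move=> [x0 x1]; rewrite /sphere /= -x1; apply: eq_bigr => k _.
by rewrite -[in RHS](sqlift_signed_sqrt y x0) [RHS]mxE.
Qed.

Lemma continuous_signed_sqrt (y : E) : continuous (signed_sqrt y).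
Proof.
move=> x; apply/(cvg_ballP (FF := nbhs_filter x)) => e e0.
have : \forall z \near x, forall k, ball (signed_sqrt y x ord0 k) e (signed_sqrt y z ord0 k).
  apply: (@filter_forall _ _ _ _ (nbhs_filter x)) => k.
  have sk : {for x, continuous (fun z : E =>
      (-1) ^+ (y ord0 k < 0)%R * Num.sqrt (z ord0 k))}.
    have sq : {for x, continuous (fun z : E => Num.sqrt (z ord0 k))}.
      exact: continuous_comp (@coord_continuous _ _ _ ord0 k x) (@sqrt_continuous R _).
    exact: cvgMl_tmp sq.
  by rewrite mxE; near=> z; rewrite mxE; near: z; exact: sk _ (nbhsx_ballx _ _ e0).
by apply: filterS => z zk; split=> // i k; rewrite (ord1 i); exact: zk.
Unshelve. all: by end_near. Qed.

Lemma local_local_sqlift (y : E) : sphere y -> local_local y.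
Proof.
move=> sy f _; apply: (local_min_on_section (s := signed_sqrt y)).
- by move=> x sx; split; [exact: sphere_signed_sqrt | exact: sqlift_signed_sqrt sx.1].
- exact: signed_sqrt_sqlift.
- exact: continuous_signed_sqrt.
- exact: simplex_sqlift.
Qed.

End sphere_lift.

Theorem proposition2p5 (R : realType) (n : nat) :
  (forall y : 'rV[R]_n, sphere y -> local_local y) /\
  (forall y : 'rV[R]_n, sphere y -> (one_to_one y <-> forall i : 'I_n, y ord0 i != 0)) /\
  (forall y : 'rV[R]_n, sphere y -> two_to_one y).
Proof.
split; first exact: local_local_sqlift.
split; last exact: two_to_one_sqlift.
move=> y sy; split; first exact: one_to_one_sqlift_coord_neq0.
exact: one_to_one_sqlift.
Qed.
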